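(* Let $I\subset\mathbb R$ be a bounded closed non-degenerate interval, $r\ge1$, and let $f:I\to\overline{\mathbb R}$ be non-decreasing with $f\in L^r(I)$. Let $a,b\in\mathbb R$ with $a<b$. Then the function $$\psi(\xi)=\big\|f-\big(a\mathbf 1_{[\min I,\xi[}+b\mathbf 1_{[\xi,\max I]}\big)\big\|_{L^r(I)},\qquad \xi\in I,$$ attains its minimal value at $\xi$ if and only if $\xi\in Q^f_{(a+b)/2}$.
   Context: For a non-decreasing $f:I\to\overline{\mathbb R}$ on a closed non-degenerate interval $I$ and $t\in\overline{\mathbb R}$, the $t$-quantile set is $Q^f_t=[\inf\{x\in I:f(x)\ge t\},\ \sup\{x\in I:f(x)\le t\}]$, with the conventions $\inf\varnothing=\max I$, $\sup\varnothing=\min I$. *)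

From Stdlib Require Import Reals Lra.
Open Scope R_scope.

Inductive ERbar : Type := Fin (x : R) | PInf | NInf.

Definition ERle (x y : ERbar) : Prop :=
  match x, y with
  | NInf, _ => True
  | _, PInf => True
  | Fin u, Fin v => u <= v
  | _, _ => False
  end.

(* real part (used only where f is finite) *)
Definition ER_real (x : ERbar) : R := match x with Fin u => u | _ => 0 end.

Definition is_finite_ER (x : ERbar) : Prop := exists u, x = Fin u.

(* |x|^p, with the convention |0|^p = 0 (p > 0) *)
Definition rpow_abs (x p : R) : R :=
  if Req_EM_T x 0 then 0 else Rpower (Rabs x) p.

Definition nondecreasing_on (lo hi : R) (f : R -> ERbar) : Prop :=
  forall x y, lo <= x -> x <= y -> y <= hi -> ERle (f x) (f y).

(* Lebesgue integral over [lo,hi] of a nonnegative function h that is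
   Riemann integrable on compact subintervals of ]lo,hi[, rendered as the
   improper Riemann integral: the supremum of the integrals over [c,d]
   with lo < c < d < hi.  [integral_nonneg lo hi h V] : integral equals V
   (finite). *)
Definition compact_integrals (lo hi : R) (h : R -> R) (v : R) : Prop :=
  exists c d, lo < c /\ c < d /\ d < hi /\
    exists pr : Riemann_integrable h c d, RiemannInt pr = v.

Definition integral_nonneg (lo hi : R) (h : R -> R) (V : R) : Prop :=
  is_lub (compact_integrals lo hi h) V.

Definition in_Lr (lo hi r : R) (f : R -> ERbar) : Prop :=
  (forall x, lo < x < hi -> is_finite_ER (f x)) /\
  exists V, integral_nonneg lo hi (fun x => rpow_abs (ER_real (f x)) r) V.

Definition Lr_dist (lo hi r : R) (f : R -> ERbar) (g : R -> R) (N : R) : Prop :=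
  exists V, integral_nonneg lo hi (fun x => rpow_abs (ER_real (f x) - g x) r) V
            /\ N = rpow_abs V (/ r).

Definition step_fun (a b xi : R) (x : R) : R :=
  if Rlt_dec x xi then a else b.

Definition is_glb (E : R -> Prop) (m : R) : Prop :=
  (forall x, E x -> m <= x) /\ (forall b, (forall x, E x -> b <= x) -> b <= m).

(* Quantile set Q^f_t = [inf{x in I : f x >= t}, sup{x in I : f x <= t}],
   inf of empty = max I = hi, sup of empty = min I = lo. *)
Definition quantile_lo (lo hi : R) (f : R -> ERbar) (t : ERbar) (L : R) : Prop :=
  let S := fun x => lo <= x <= hi /\ ERle t (f x) in
  ((exists x, S x) /\ is_glb S L) \/ ((forall x, ~ S x) /\ L = hi).

Definition quantile_hi (lo hi : R) (f : R -> ERbar) (t : ERbar) (U : R) : Prop :=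
  let S := fun x => lo <= x <= hi /\ ERle (f x) t in
  ((exists x, S x) /\ is_lub S U) \/ ((forall x, ~ S x) /\ U = lo).

Definition in_quantile (lo hi : R) (f : R -> ERbar) (t : ERbar) (xi : R) : Prop :=
  exists L U, quantile_lo lo hi f t L /\ quantile_hi lo hi f t U /\ L <= xi <= U.

From Coquelicot Require Import Coquelicot.
From Stdlib Require Import Reals Lra Classical ClassicalEpsilon.
Open Scope R_scope.

(* Moving the jump of the step function from [xi] to [eta] changes the
   integrand only between the two points, where the value [a] is traded for
   [b] or back.  As [|y - b| <= |y - a|] exactly when [y >= (a + b) / 2] and [f]
   is nondecreasing, moving the jump into the quantile set never increases the
   distance, while moving it across an interval on which [f] stays strictly on
   one side of [(a + b) / 2] decreases it by a uniform gap on a subinterval,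
   thanks to the superadditivity of [s |-> s ^ r] for [r >= 1].  The integrals
   are improper Riemann integrals; they exist since [|f - k| ^ r] is the sum of
   a nondecreasing and a nonincreasing function. *)

Lemma rpow_abs_0 p : rpow_abs 0 p = 0.
Proof. unfold rpow_abs; destruct (Req_EM_T 0 0); lra. Qed.

Lemma rpow_abs_gt0 s p : s <> 0 -> 0 < rpow_abs s p.
Proof. intros Hs; unfold rpow_abs; destruct (Req_EM_T s 0); [lra | apply exp_pos]. Qed.

Lemma rpow_abs_ge0 s p : 0 <= rpow_abs s p.
Proof.
  destruct (Req_dec s 0) as [-> | Hs].
  - rewrite rpow_abs_0; lra.
  - now apply Rlt_le, rpow_abs_gt0.
Qed.

Lemma rpow_abs_Rabs s p : rpow_abs (Rabs s) p = rpow_abs s p.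
Proof.
  destruct (Req_dec s 0) as [-> | Hs]; [now rewrite Rabs_R0 |].
  unfold rpow_abs; rewrite Rabs_Rabsolu.
  destruct (Req_EM_T (Rabs s) 0) as [E |]; [now apply Rabs_no_R0 in Hs |].
  now destruct (Req_EM_T s 0).
Qed.

Lemma rpow_abs_le s s' p : 0 <= p -> Rabs s <= Rabs s' -> rpow_abs s p <= rpow_abs s' p.
Proof.
  intros Hp Hss'. destruct (Req_dec s 0) as [-> | Hs].
  { rewrite rpow_abs_0; apply rpow_abs_ge0. }
  assert (Hs' : s' <> 0).
  { intros ->; rewrite Rabs_R0 in Hss'; pose proof (Rabs_pos_lt s Hs); lra. }
  unfold rpow_abs; destruct (Req_EM_T s 0), (Req_EM_T s' 0); try contradiction.
  apply Rle_Rpower_l; auto. split; auto. now apply Rabs_pos_lt.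
Qed.

Lemma rpow_abs_lt s s' p : 0 < p -> Rabs s < Rabs s' -> rpow_abs s p < rpow_abs s' p.
Proof.
  intros Hp Hss'.
  assert (Hs' : s' <> 0).
  { intros ->; rewrite Rabs_R0 in Hss'; pose proof (Rabs_pos s); lra. }
  destruct (Req_dec s 0) as [-> | Hs]; [rewrite rpow_abs_0; now apply rpow_abs_gt0 |].
  unfold rpow_abs; destruct (Req_EM_T s 0), (Req_EM_T s' 0); try contradiction.
  apply Rlt_Rpower_l; auto. split; auto. now apply Rabs_pos_lt.
Qed.

Lemma rpow_abs_mult s s' p : rpow_abs (s * s') p = rpow_abs s p * rpow_abs s' p.
Proof.
  destruct (Req_dec s 0) as [-> | Hs]; [rewrite Rmult_0_l, !rpow_abs_0; ring |].
  destruct (Req_dec s' 0) as [-> | Hs']; [rewrite Rmult_0_r, !rpow_abs_0; ring |].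
  unfold rpow_abs.
  destruct (Req_EM_T (s * s') 0) as [E |]; [now apply Rmult_integral in E as [|] |].
  destruct (Req_EM_T s 0), (Req_EM_T s' 0); try contradiction.
  rewrite Rabs_mult, Rpower_mult_distr; auto; now apply Rabs_pos_lt.
Qed.

Lemma rpow_abs_le_id l p : 1 <= p -> 0 <= l <= 1 -> rpow_abs l p <= l.
Proof.
  intros Hp Hl. unfold rpow_abs; destruct (Req_EM_T l 0); [lra |].
  rewrite Rabs_right by lra.
  replace p with (1 + (p - 1)) by ring.
  rewrite Rpower_plus, Rpower_1 by lra.
  assert (Rpower l (p - 1) <= Rpower 1 (p - 1)) by (apply Rle_Rpower_l; lra).
  unfold Rpower at 2 in H; rewrite ln_1, Rmult_0_r, exp_0 in H.
  nra.
Qed.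

(* Scale by [s + g]: both [s / (s + g)] and [g / (s + g)] lie in [0, 1], where [l ^ p <= l]. *)
Lemma rpow_abs_superadditive s g p : 1 <= p -> 0 <= s -> 0 <= g ->
  rpow_abs s p + rpow_abs g p <= rpow_abs (s + g) p.
Proof.
  intros Hp Hs Hg. destruct (Req_dec (s + g) 0) as [E | E].
  { replace s with 0 by lra; replace g with 0 by lra. rewrite Rplus_0_r, rpow_abs_0. lra. }
  set (T := s + g) in *.
  assert (HT : T = s + g) by reflexivity. clearbody T.
  assert (HTpos : 0 < T) by lra.
  assert (Hfrac : forall u, 0 <= u <= T -> rpow_abs (u / T) p <= u / T).
  { intros u Hu. apply rpow_abs_le_id; auto.
    split; [apply Rdiv_le_0_compat; lra |].
    apply Rmult_le_reg_r with T; [lra |].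
    unfold Rdiv; rewrite Rmult_assoc, Rinv_l, Rmult_1_r, Rmult_1_l; lra. }
  assert (HsT : 0 <= s <= T) by lra. assert (HgT : 0 <= g <= T) by lra.
  replace s with (s / T * T) at 1 by (field; lra).
  replace g with (g / T * T) at 1 by (field; lra).
  rewrite !rpow_abs_mult.
  apply Hfrac in HsT. apply Hfrac in HgT.
  pose proof (rpow_abs_ge0 T p).
  replace (rpow_abs T p) with ((s / T + g / T) * rpow_abs T p) at 3
    by (replace (s / T + g / T) with 1 by (rewrite HT; field; lra); ring).
  nra.
Qed.

Lemma rpow_abs_add_le s g w p : 1 <= p -> 0 <= g -> Rabs s + g <= Rabs w ->
  rpow_abs s p + rpow_abs g p <= rpow_abs w p.
Proof.
  intros Hp Hg Hsw. rewrite <- (rpow_abs_Rabs s).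
  apply Rle_trans with (rpow_abs (Rabs s + g) p).
  - apply rpow_abs_superadditive; auto. apply Rabs_pos.
  - apply rpow_abs_le; [lra |]. rewrite (Rabs_right (Rabs s + g)); [lra |].
    pose proof (Rabs_pos s); lra.
Qed.

Lemma rpow_abs_sub_le u s M p : 0 <= p -> Rabs s <= M ->
  rpow_abs (u - s) p <= rpow_abs 2 p * (rpow_abs u p + rpow_abs M p).
Proof.
  intros Hp Hs. set (m := Rmax (Rabs u) M).
  assert (Hm : Rabs u <= m /\ M <= m) by (split; [apply Rmax_l | apply Rmax_r]).
  assert (rpow_abs (u - s) p <= rpow_abs 2 p * rpow_abs m p).
  { rewrite <- rpow_abs_mult. apply rpow_abs_le; auto.
    pose proof (Rabs_triang u (- s)). rewrite Rabs_Ropp in H.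
    rewrite Rabs_mult, (Rabs_right 2), (Rabs_right m) by (pose proof (Rabs_pos s); lra).
    unfold Rminus; lra. }
  assert (rpow_abs m p <= rpow_abs u p + rpow_abs M p).
  { pose proof (rpow_abs_ge0 u p); pose proof (rpow_abs_ge0 M p).
    unfold m, Rmax; destruct (Rle_dec (Rabs u) M); [lra | rewrite rpow_abs_Rabs; lra]. }
  pose proof (rpow_abs_ge0 2 p); nra.
Qed.

Lemma rpow_abs_pos_neg u p :
  rpow_abs u p = rpow_abs (Rmax u 0) p + rpow_abs (Rmax (- u) 0) p.
Proof.
  unfold Rmax; destruct (Rle_dec u 0), (Rle_dec (- u) 0).
  - replace u with 0 by lra; rewrite rpow_abs_0; ring.
  - rewrite rpow_abs_0, <- (rpow_abs_Rabs (- u)), Rabs_Ropp, rpow_abs_Rabs; ring.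
  - rewrite rpow_abs_0; ring.
  - lra.
Qed.

(* The step approximations of [g1] and of the nonnegative gap [g2 - g1]
   together give step approximations of [f]. *)
Lemma ex_RInt_sandwich (f : R -> R) a b : a <= b ->
  (forall eps, 0 < eps -> exists g1 g2, ex_RInt g1 a b /\ ex_RInt g2 a b /\
     (forall x, a <= x <= b -> g1 x <= f x <= g2 x) /\ RInt g2 a b - RInt g1 a b < eps) ->
  ex_RInt f a b.
Proof.
  intros Hab Happrox. apply ex_RInt_Reals_1. intros eps.
  assert (He : 0 < eps / 4) by (destruct eps; simpl; lra).
  specialize (Happrox _ He).
  apply constructive_indefinite_description in Happrox as [g1 Hg1].
  apply constructive_indefinite_description in Hg1 as [g2 [E1 [E2 [Hg Hgap]]]].
  pose (p1 := ex_RInt_Reals_0 _ _ _ E1).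
  pose (pd := RiemannInt_P10 (-1) (ex_RInt_Reals_0 _ _ _ E2) p1).
  assert (Epd : RiemannInt pd = RInt g2 a b - RInt g1 a b).
  { rewrite (RiemannInt_P13 (ex_RInt_Reals_0 _ _ _ E2) p1), <- !RInt_Reals; ring. }
  assert (RInt g1 a b <= RInt g2 a b) by (apply RInt_le; auto; intros x Hx; destruct (Hg x); lra).
  assert (exN : exists N, Rabs (RiemannInt_SF (phi_sequence RinvN pd N) - RiemannInt pd) < eps / 4
                          /\ RinvN N < eps / 4).
  { assert (Hcv : Un_cv (fun N => RiemannInt_SF (phi_sequence RinvN pd N)) (RiemannInt pd)).
    { unfold RiemannInt; now destruct (RiemannInt_exists pd RinvN RinvN_cv). }
    destruct (Hcv _ He) as [N1 HN1], (RinvN_cv He) as [N2 HN2].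
    exists (max N1 N2); split; [apply HN1, Nat.le_max_l |].
    specialize (HN2 _ (Nat.le_max_r N1 N2)); unfold Rdist in HN2.
    rewrite Rminus_0_r, Rabs_right in HN2; auto. left; apply (cond_pos (RinvN _)). }
  apply constructive_indefinite_description in exN as [N [HN1 HN2]].
  set (phi2 := phi_sequence RinvN pd N) in *.
  destruct (phi_sequence_prop RinvN pd N) as [psi2 [Hp2 Hi2]]; fold phi2 in Hp2.
  destruct (p1 (mkposreal _ He)) as [phi1 [psi1 [Hp1 Hi1]]]; simpl in Hi1.
  exists phi1, (mkStepFun (StepFun_P28 1 (mkStepFun (StepFun_P28 1 psi1 phi2)) psi2)).
  split.
  - intros x Hx; simpl.
    specialize (Hp1 x Hx); specialize (Hp2 x Hx).
    rewrite Rmin_left, Rmax_right in Hx by auto. specialize (Hg x Hx).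
    apply Rabs_le_between in Hp1, Hp2. apply Rabs_le_between; lra.
  - rewrite StepFun_P30; simpl; rewrite StepFun_P30.
    apply Rabs_lt_between in Hi1, Hi2, HN1. apply Rabs_lt_between; lra.
Qed.

Section Staircase.
Variables (g : R -> R) (h : R).
Hypothesis h_pos : 0 < h.

(* [stair o n x0] is the step function on [n] cells of width [h] starting at
   [x0] whose value on a cell [[y, y + h]] is [g (y + o)]: for a nondecreasing
   [g], [o = 0] and [o = h] give the lower and upper staircases. *)
Fixpoint stair (o : R) (n : nat) (x0 x : R) : R :=
  match n with
  | O => g x0
  | S m => if Rle_dec x (x0 + h) then g (x0 + o) else stair o m (x0 + h) x
  end.

Fixpoint stair_sum (o : R) (n : nat) (x0 : R) : R :=
  match n with
  | O => 0
  | S m => h * g (x0 + o) + stair_sum o m (x0 + h)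
  end.

Lemma INR_S_mul_add n x0 : x0 + INR (S n) * h = x0 + h + INR n * h.
Proof. rewrite S_INR; ring. Qed.

Lemma is_RInt_stair o n x0 : is_RInt (stair o n x0) x0 (x0 + INR n * h) (stair_sum o n x0).
Proof.
  revert x0; induction n as [| n IH]; intros x0; simpl stair_sum.
  { rewrite Rmult_0_l, Rplus_0_r; exact (is_RInt_point _ _). }
  rewrite INR_S_mul_add. pose proof (pos_INR n).
  apply (is_RInt_Chasles _ _ (x0 + h) _ (h * g (x0 + o)) (stair_sum o n (x0 + h))).
  - replace (h * g (x0 + o)) with ((x0 + h - x0) * g (x0 + o)) by ring.
    apply (is_RInt_ext (fun _ => g (x0 + o))); [| exact (is_RInt_const _ _ _)].
    intros x Hx; rewrite Rmin_left, Rmax_right in Hx by lra; simpl.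
    destruct (Rle_dec x (x0 + h)); lra.
  - apply (is_RInt_ext (stair o n (x0 + h))); [| apply IH].
    intros x Hx; rewrite Rmin_left, Rmax_right in Hx by nra; simpl.
    destruct (Rle_dec x (x0 + h)); [lra | reflexivity].
Qed.

Lemma stair_sum_sub n x0 :
  stair_sum h n x0 - stair_sum 0 n x0 = h * (g (x0 + INR n * h) - g x0).
Proof.
  revert x0; induction n as [| n IH]; intros x0; simpl stair_sum.
  - rewrite Rmult_0_l, Rplus_0_r; ring.
  - rewrite INR_S_mul_add, Rplus_0_r. specialize (IH (x0 + h)); lra.
Qed.

Lemma stair_sandwich n x0 :
  (forall u v, x0 <= u -> u <= v -> v <= x0 + INR n * h -> g u <= g v) ->
  forall x, x0 <= x <= x0 + INR n * h -> stair 0 n x0 x <= g x <= stair h n x0 x.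
Proof.
  revert x0; induction n as [| n IH]; intros x0 Hg x Hx; simpl.
  - simpl in Hx; replace x with x0 by lra; lra.
  - rewrite INR_S_mul_add in Hg, Hx.
    assert (0 <= INR n * h) by (apply Rmult_le_pos; [apply pos_INR | lra]).
    destruct (Rle_dec x (x0 + h)).
    + rewrite Rplus_0_r; split; apply Hg; lra.
    + apply IH; [intros u v Hu Huv Hv; apply Hg |]; lra.
Qed.

End Staircase.

(* On [n] cells the upper and lower staircases differ in integral by [h (g b - g a)]. *)
Lemma ex_RInt_nondecreasing (g : R -> R) a b : a <= b ->
  (forall u v, a <= u -> u <= v -> v <= b -> g u <= g v) -> ex_RInt g a b.
Proof.
  intros Hab Hg. destruct (Req_dec a b) as [<- | Hne]; [apply ex_RInt_point |].
  apply ex_RInt_sandwich; auto. intros eps Heps.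
  set (K := (b - a) * (g b - g a) + 1).
  assert (HK : 0 < K) by (assert (g a <= g b) by (apply Hg; lra); unfold K; nra).
  destruct (archimed_cor1 (eps / K)) as [N [HN HN0]]; [apply Rdiv_lt_0_compat; lra |].
  assert (HNpos : 0 < INR N) by now apply lt_0_INR.
  set (h := (b - a) / INR N).
  assert (Hh : 0 < h) by (apply Rdiv_lt_0_compat; lra).
  assert (Eb : a + INR N * h = b) by (unfold h; field; lra).
  pose proof (is_RInt_stair g h Hh 0 N a) as Ilow. pose proof (is_RInt_stair g h Hh h N a) as Iup.
  rewrite Eb in Ilow, Iup.
  exists (stair g h 0 N a), (stair g h h N a); repeat split.
  - now exists (stair_sum g h 0 N a).
  - now exists (stair_sum g h h N a).
  - apply stair_sandwich; rewrite ?Eb; auto.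
  - apply stair_sandwich; rewrite ?Eb; auto.
  - rewrite (is_RInt_unique _ _ _ _ Ilow), (is_RInt_unique _ _ _ _ Iup), stair_sum_sub, Eb.
    apply Rle_lt_trans with (K / INR N).
    + unfold h, K; apply Rmult_le_reg_r with (INR N); auto; field_simplify; lra.
    + apply Rmult_lt_reg_r with (/ K); [now apply Rinv_0_lt_compat |].
      replace (K / INR N * / K) with (/ INR N) by (field; lra). lra.
Qed.

Lemma ex_RInt_nonincreasing (g : R -> R) a b : a <= b ->
  (forall u v, a <= u -> u <= v -> v <= b -> g v <= g u) -> ex_RInt g a b.
Proof.
  intros Hab Hg.
  apply (ex_RInt_ext (fun x => opp (opp (g x)))); [intros; apply opp_opp |].
  apply (ex_RInt_opp (fun x => opp (g x))), ex_RInt_nondecreasing; auto.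
  intros u v Hu Huv Hv; specialize (Hg u v Hu Huv Hv); unfold opp; simpl; lra.
Qed.

Definition ex_RInt_loc (lo hi : R) (h : R -> R) : Prop :=
  forall c d, lo < c -> c <= d -> d < hi -> ex_RInt h c d.

Lemma ex_RInt_subinterval (h : R -> R) a b c d :
  a <= c -> c <= d -> d <= b -> ex_RInt h a b -> ex_RInt h c d.
Proof.
  intros Hac Hcd Hdb E.
  apply (@ex_RInt_Chasles_2 R_CompleteNormedModule _ a); [lra |].
  now apply (@ex_RInt_Chasles_1 R_CompleteNormedModule _ _ _ b); [lra |].
Qed.

Lemma RInt_Chasles_R (h : R -> R) a b c : ex_RInt h a b -> ex_RInt h b c ->
  RInt h a b + RInt h b c = RInt h a c.
Proof. exact (@RInt_Chasles R_CompleteNormedModule h a b c). Qed.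

Lemma compact_integrals_RInt lo hi h v : compact_integrals lo hi h v <->
  exists c d, lo < c /\ c < d /\ d < hi /\ ex_RInt h c d /\ RInt h c d = v.
Proof.
  split.
  - intros [c [d [Hc [Hcd [Hd [pr <-]]]]]]. exists c, d.
    repeat split; auto; [now apply ex_RInt_Reals_1 | apply RInt_Reals].
  - intros [c [d [Hc [Hcd [Hd [Hex <-]]]]]]. exists c, d.
    repeat split; auto. exists (ex_RInt_Reals_0 _ _ _ Hex). now rewrite <- RInt_Reals.
Qed.

Lemma RInt_le_integral_nonneg lo hi h V c d : ex_RInt_loc lo hi h -> integral_nonneg lo hi h V ->
  lo < c -> c < d -> d < hi -> RInt h c d <= V.
Proof.
  intros Hh [Hub _] Hc Hcd Hd. apply Hub, compact_integrals_RInt.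
  exists c, d; repeat split; auto. apply Hh; lra.
Qed.

Lemma integral_nonneg_ge0 lo hi h V : (forall x, 0 <= h x) ->
  integral_nonneg lo hi h V -> 0 <= V.
Proof.
  intros Hh [Hub Hlub].
  destruct (classic (exists v, compact_integrals lo hi h v)) as [[v Hv] | Hempty].
  - apply Rle_trans with v; [| now apply Hub].
    apply compact_integrals_RInt in Hv as [c [d [_ [Hcd [_ [Hex <-]]]]]].
    apply RInt_ge_0; auto; lra.
  - assert (V <= V - 1) by (apply Hlub; intros v Hv; contradiction (Hempty (ex_intro _ v Hv))).
    lra.
Qed.

Lemma RInt_le_except (h1 h2 : R -> R) a b p : a <= b -> ex_RInt h1 a b -> ex_RInt h2 a b ->
  (forall x, a < x < b -> x <> p -> h1 x <= h2 x) -> RInt h1 a b <= RInt h2 a b.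
Proof.
  intros Hab E1 E2 Hle. destruct (classic (a < p < b)) as [Hp | Hp].
  - assert (Hsplit : forall h : R -> R, ex_RInt h a b ->
              ex_RInt h a p /\ ex_RInt h p b /\ RInt h a b = RInt h a p + RInt h p b).
    { intros h E.
      assert (Ea : ex_RInt h a p) by (apply (ex_RInt_subinterval _ a b); auto; lra).
      assert (Eb : ex_RInt h p b) by (apply (ex_RInt_subinterval _ a b); auto; lra).
      repeat split; auto. now rewrite RInt_Chasles_R. }
    destruct (Hsplit h1 E1) as [A1 [B1 ->]], (Hsplit h2 E2) as [A2 [B2 ->]].
    apply Rplus_le_compat; apply RInt_le; auto; try lra; intros x Hx; apply Hle; lra.
  - apply RInt_le; auto. intros x Hx. apply Hle; auto. intros ->; auto.
Qed.

Lemma integral_nonneg_le lo hi (h1 h2 : R -> R) p V1 V2 :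
  ex_RInt_loc lo hi h1 -> ex_RInt_loc lo hi h2 ->
  (forall x, lo < x < hi -> x <> p -> h1 x <= h2 x) ->
  integral_nonneg lo hi h1 V1 -> integral_nonneg lo hi h2 V2 -> V1 <= V2.
Proof.
  intros E1 E2 Hle [_ Hlub1] HV2. apply Hlub1. intros v Hv.
  apply compact_integrals_RInt in Hv as [c [d [Hc [Hcd [Hd [_ <-]]]]]].
  apply Rle_trans with (RInt h2 c d); [| now apply (RInt_le_integral_nonneg lo hi)].
  apply (RInt_le_except _ _ _ _ p); try apply E1; try apply E2; try lra.
  intros x Hx; apply Hle; lra.
Qed.

Lemma RInt_le_superinterval (h : R -> R) c' c d d' : (forall x, 0 <= h x) ->
  c' <= c -> c <= d -> d <= d' -> ex_RInt h c' d' -> RInt h c d <= RInt h c' d'.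
Proof.
  intros Hh Hc' Hcd Hd' E.
  assert (Esub : forall u v, c' <= u -> u <= v -> v <= d' -> ex_RInt h u v)
    by (intros; apply (ex_RInt_subinterval _ c' d'); auto).
  rewrite <- (RInt_Chasles_R h c' d d'), <- (RInt_Chasles_R h c' c d) by (apply Esub; lra).
  assert (0 <= RInt h c' c) by (apply RInt_ge_0; auto; apply Esub; lra).
  assert (0 <= RInt h d d') by (apply RInt_ge_0; auto; apply Esub; lra).
  lra.
Qed.

Lemma RInt_add_gap_le (h1 h2 : R -> R) a b p P Q gap :
  a <= P -> P <= Q -> Q <= b -> ex_RInt h1 a b -> ex_RInt h2 a b ->
  (forall x, a < x < b -> x <> p -> h1 x <= h2 x) ->
  (forall x, P < x < Q -> h1 x + gap <= h2 x) ->
  RInt h1 a b + gap * (Q - P) <= RInt h2 a b.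
Proof.
  intros HaP HPQ HQb E1 E2 Hle Hgap.
  assert (Hsplit : forall h : R -> R, ex_RInt h a b ->
            ex_RInt h a P /\ ex_RInt h P Q /\ ex_RInt h Q b /\
            RInt h a b = RInt h a P + RInt h P Q + RInt h Q b).
  { intros h E.
    assert (Esub : forall u v, a <= u -> u <= v -> v <= b -> ex_RInt h u v)
      by (intros; apply (ex_RInt_subinterval _ a b); auto).
    repeat split; try (apply Esub; lra).
    rewrite <- (RInt_Chasles_R h a Q b), <- (RInt_Chasles_R h a P Q) by (apply Esub; lra).
    reflexivity. }
  destruct (Hsplit h1 E1) as [A1 [B1 [C1 ->]]], (Hsplit h2 E2) as [A2 [B2 [C2 ->]]].
  assert (RInt h1 a P <= RInt h2 a P)
    by (apply (RInt_le_except _ _ _ _ p); auto; intros; apply Hle; lra).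
  assert (RInt h1 Q b <= RInt h2 Q b)
    by (apply (RInt_le_except _ _ _ _ p); auto; intros; apply Hle; lra).
  assert (RInt h1 P Q + gap * (Q - P) <= RInt h2 P Q).
  { replace (RInt h1 P Q + gap * (Q - P)) with (RInt (fun x => h1 x + gap) P Q).
    - apply RInt_le; auto. apply (ex_RInt_plus h1 (fun _ => gap)); auto. apply ex_RInt_const.
    - rewrite (RInt_plus h1 (fun _ => gap)), RInt_const by (auto; apply ex_RInt_const).
      simpl; unfold plus, scal; simpl; unfold mult; simpl; ring. }
  lra.
Qed.

(* Every compact integral of [h1] is dominated by one of [h2] over a larger
   interval containing [[P, Q]], minus the gap. *)
Lemma integral_nonneg_lt lo hi (h1 h2 : R -> R) p P Q gap V1 V2 :
  ex_RInt_loc lo hi h1 -> ex_RInt_loc lo hi h2 -> (forall x, 0 <= h1 x) ->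
  (forall x, lo < x < hi -> x <> p -> h1 x <= h2 x) ->
  (forall x, P < x < Q -> h1 x + gap <= h2 x) ->
  lo < P -> P < Q -> Q < hi -> 0 < gap ->
  integral_nonneg lo hi h1 V1 -> integral_nonneg lo hi h2 V2 -> V1 < V2.
Proof.
  intros E1 E2 Hh1 Hle Hgap HP HPQ HQ Hg [_ Hlub1] HV2.
  enough (V1 <= V2 - gap * (Q - P)) by (assert (0 < gap * (Q - P)) by nra; lra).
  apply Hlub1. intros v Hv.
  apply compact_integrals_RInt in Hv as [c [d [Hc [Hcd [Hd [_ <-]]]]]].
  set (c' := Rmin c P). set (d' := Rmax d Q).
  assert (Hc' : lo < c' <= c /\ c' <= P)
    by (unfold c'; split; [split; [apply Rmin_glb_lt | apply Rmin_l] | apply Rmin_r]; lra).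
  assert (Hd' : d <= d' < hi /\ Q <= d')
    by (unfold d'; split; [split; [apply Rmax_l | apply Rmax_lub_lt] | apply Rmax_r]; lra).
  assert (RInt h1 c d <= RInt h1 c' d')
    by (apply RInt_le_superinterval; [exact Hh1 | lra | lra | lra | apply E1; lra]).
  assert (RInt h1 c' d' + gap * (Q - P) <= RInt h2 c' d')
    by (apply (RInt_add_gap_le _ _ _ _ p); auto; try lra; [apply E1 | apply E2 |]; try lra;
        intros x Hx; apply Hle; lra).
  assert (RInt h2 c' d' <= V2) by (apply (RInt_le_integral_nonneg lo hi); auto; lra).
  lra.
Qed.

Lemma integral_nonneg_exists lo hi (h h0 : R -> R) V0 K C : lo < hi ->
  ex_RInt_loc lo hi h -> ex_RInt_loc lo hi h0 -> integral_nonneg lo hi h0 V0 ->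
  0 <= K -> 0 <= C -> (forall x, lo < x < hi -> h x <= K * (h0 x + C)) ->
  exists V, integral_nonneg lo hi h V.
Proof.
  intros Hlohi E E0 HV0 HK HC Hbound.
  assert (Hbounded : bound (compact_integrals lo hi h)).
  { exists (K * (V0 + C * (hi - lo))). intros v Hv.
    apply compact_integrals_RInt in Hv as [c [d [Hc [Hcd [Hd [_ <-]]]]]].
    assert (E0cd : ex_RInt h0 c d) by (apply E0; lra).
    assert (Esum : ex_RInt (fun x => h0 x + C) c d)
      by (apply (ex_RInt_plus h0 (fun _ => C)); auto; apply ex_RInt_const).
    apply Rle_trans with (RInt (fun x => K * (h0 x + C)) c d).
    - apply RInt_le; [lra | apply E; lra | now apply (ex_RInt_scal (fun x => h0 x + C)) |].
      intros x Hx; apply Hbound; lra.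
    - rewrite (RInt_scal _ _ _ _ Esum), (RInt_plus h0 (fun _ => C)), RInt_const
        by first [exact E0cd | apply ex_RInt_const].
      assert (RInt h0 c d <= V0) by (apply (RInt_le_integral_nonneg lo hi); auto).
      simpl; unfold plus, scal; simpl; unfold mult; simpl.
      apply Rmult_le_compat_l; auto. nra. }
  assert (Hinhabited : exists v, compact_integrals lo hi h v).
  { set (c := lo + (hi - lo) / 3). set (d := lo + 2 * (hi - lo) / 3).
    exists (RInt h c d). apply compact_integrals_RInt.
    exists c, d; unfold c, d; repeat split; try lra. apply E; lra. }
  destruct (completeness _ Hbounded Hinhabited) as [V HV]. now exists V.
Qed.

Lemma is_glb_exists (E : R -> Prop) : (exists x, E x) -> (exists m, forall x, E x -> m <= x) ->
  exists m, is_glb E m.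
Proof.
  intros [x Ex] [m Hm].
  destruct (completeness (fun y => E (- y))) as [M [HubM HlubM]].
  - exists (- m). intros y Ey. specialize (Hm _ Ey). lra.
  - exists (- x). now rewrite Ropp_involutive.
  - exists (- M). split.
    + intros y Ey. enough (- y <= M) by lra. apply HubM. now rewrite Ropp_involutive.
    + intros l Hl. enough (M <= - l) by lra. apply HlubM. intros y Ey. specialize (Hl _ Ey). lra.
Qed.

Lemma ERle_trans x y z : ERle x y -> ERle y z -> ERle x z.
Proof. destruct x, y, z; simpl; intros; auto; lra || contradiction. Qed.

Section Quantiles.
Variables (lo hi : R) (f : R -> ERbar) (t : ERbar).
Hypothesis lo_le_hi : lo <= hi.

Lemma quantile_lo_exists : exists L, quantile_lo lo hi f t L /\ lo <= L <= hi.
Proof.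
  destruct (classic (exists x, lo <= x <= hi /\ ERle t (f x))) as [Hne | Hempty].
  - destruct (is_glb_exists _ Hne) as [L HL].
    { exists lo. intros x [Hx _]. lra. }
    exists L. split; [left; now split |].
    destruct Hne as [x Hx], HL as [Hlb Hglb]. split.
    + apply Hglb. intros y [Hy _]. lra.
    + apply Rle_trans with x; [now apply Hlb | lra].
  - exists hi. split; [right | lra]. split; auto. intros x Hx. apply Hempty. now exists x.
Qed.

Lemma quantile_hi_exists : exists U, quantile_hi lo hi f t U /\ lo <= U <= hi.
Proof.
  destruct (classic (exists x, lo <= x <= hi /\ ERle (f x) t)) as [Hne | Hempty].
  - destruct (completeness _ (ex_intro _ hi (fun y Hy => proj2 (proj1 Hy))) Hne) as [U HU].
    exists U. split; [left; now split |].
    destruct Hne as [x Hx], HU as [Hub Hlub]. split.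
    + apply Rle_trans with x; [lra | now apply Hub].
    + apply Hlub. intros y [Hy _]. lra.
  - exists lo. split; [right | lra]. split; auto. intros x Hx. apply Hempty. now exists x.
Qed.

Lemma not_ge_below_quantile_lo L x : quantile_lo lo hi f t L ->
  lo <= x <= hi -> x < L -> ~ ERle t (f x).
Proof.
  intros [[_ [Hlb _]] | [Hempty _]] Hx HxL Htx.
  - assert (L <= x) by (apply Hlb; now split). lra.
  - now apply (Hempty x).
Qed.

Lemma not_le_above_quantile_hi U x : quantile_hi lo hi f t U ->
  lo <= x <= hi -> U < x -> ~ ERle (f x) t.
Proof.
  intros [[_ [Hub _]] | [Hempty _]] Hx HUx Hxt.
  - assert (x <= U) by (apply Hub; now split). lra.
  - now apply (Hempty x).
Qed.

Hypothesis f_nondecreasing : nondecreasing_on lo hi f.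

Lemma ge_above_quantile_lo L x : quantile_lo lo hi f t L ->
  lo <= x <= hi -> L < x -> ERle t (f x).
Proof.
  intros [[_ [_ Hglb]] | [_ ->]] Hx HLx; [| lra].
  apply NNPP. intros Hnot.
  enough (x <= L) by lra.
  apply Hglb. intros y [Hy Hty]. apply Rnot_lt_le. intros Hyx.
  apply Hnot, (ERle_trans _ _ _ Hty), f_nondecreasing; lra.
Qed.

Lemma le_below_quantile_hi U x : quantile_hi lo hi f t U ->
  lo <= x <= hi -> x < U -> ERle (f x) t.
Proof.
  intros [[_ [_ Hlub]] | [_ ->]] Hx HxU; [| lra].
  apply NNPP. intros Hnot.
  enough (U <= x) by lra.
  apply Hlub. intros y [Hy Hyt]. apply Rnot_lt_le. intros Hxy.
  apply Hnot. refine (ERle_trans _ _ _ _ Hyt). apply f_nondecreasing; lra.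
Qed.

End Quantiles.

Section Midpoint.
Variables (a b : R).
Hypothesis a_lt_b : a < b.

Lemma Rabs_sub_le_of_le_mid y : y <= (a + b) / 2 -> Rabs (y - a) <= Rabs (y - b).
Proof. intros Hy; unfold Rabs; do 2 destruct Rcase_abs; lra. Qed.

Lemma Rabs_sub_le_of_ge_mid y : (a + b) / 2 <= y -> Rabs (y - b) <= Rabs (y - a).
Proof. intros Hy; unfold Rabs; do 2 destruct Rcase_abs; lra. Qed.

Lemma Rabs_sub_gap_of_lt_mid y m : y <= m -> m < (a + b) / 2 ->
  Rabs (y - a) + Rmin (b - a) (2 * ((a + b) / 2 - m)) <= Rabs (y - b).
Proof.
  intros Hym Hm. pose proof (Rmin_l (b - a) (2 * ((a + b) / 2 - m))).
  pose proof (Rmin_r (b - a) (2 * ((a + b) / 2 - m))).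
  unfold Rabs; do 2 destruct Rcase_abs; lra.
Qed.

Lemma Rabs_sub_gap_of_gt_mid y m : m <= y -> (a + b) / 2 < m ->
  Rabs (y - b) + Rmin (b - a) (2 * (m - (a + b) / 2)) <= Rabs (y - a).
Proof.
  intros Hym Hm. pose proof (Rmin_l (b - a) (2 * (m - (a + b) / 2))).
  pose proof (Rmin_r (b - a) (2 * (m - (a + b) / 2))).
  unfold Rabs; do 2 destruct Rcase_abs; lra.
Qed.

End Midpoint.

Section StepFit.
Variables (lo hi r : R) (f : R -> ERbar) (a b : R).
Hypotheses (lo_lt_hi : lo < hi) (r_ge1 : 1 <= r) (a_lt_b : a < b).
Hypotheses (f_nondecreasing : nondecreasing_on lo hi f) (f_Lr : in_Lr lo hi r f).

Definition cost (eta x : R) : R := rpow_abs (ER_real (f x) - step_fun a b eta x) r.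

Lemma f_Fin x : lo < x < hi -> f x = Fin (ER_real (f x)).
Proof. intros Hx. destruct f_Lr as [Hfin _]. now destruct (Hfin x Hx) as [u ->]. Qed.

Lemma Fin_le_f_iff t x : lo < x < hi -> ERle (Fin t) (f x) <-> t <= ER_real (f x).
Proof. intros Hx. now rewrite (f_Fin x Hx). Qed.

Lemma f_le_Fin_iff t x : lo < x < hi -> ERle (f x) (Fin t) <-> ER_real (f x) <= t.
Proof. intros Hx. now rewrite (f_Fin x Hx). Qed.

Lemma ER_real_f_le x y : lo < x -> x <= y -> y < hi -> ER_real (f x) <= ER_real (f y).
Proof.
  intros Hx Hxy Hy. pose proof (f_nondecreasing x y) as Hf.
  rewrite (f_Fin x), (f_Fin y) in Hf by lra. apply Hf; lra.
Qed.

Lemma ex_RInt_loc_dev k : ex_RInt_loc lo hi (fun x => rpow_abs (ER_real (f x) - k) r).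
Proof.
  intros c d Hc Hcd Hd.
  set (pos x := rpow_abs (Rmax (ER_real (f x) - k) 0) r).
  set (neg x := rpow_abs (Rmax (- (ER_real (f x) - k)) 0) r).
  apply (ex_RInt_ext (fun x => plus (pos x) (neg x))).
  { intros x _. symmetry. apply rpow_abs_pos_neg. }
  assert (Hmax : forall u v, u <= v -> Rabs (Rmax u 0) <= Rabs (Rmax v 0)).
  { intros u v Huv. rewrite !Rabs_right by (apply Rle_ge, Rmax_r).
    unfold Rmax; destruct (Rle_dec u 0), (Rle_dec v 0); lra. }
  apply (ex_RInt_plus pos neg).
  - apply ex_RInt_nondecreasing; auto. intros u v Hu Huv Hv.
    apply rpow_abs_le, Hmax; [lra |]. pose proof (ER_real_f_le u v); lra.
  - apply ex_RInt_nonincreasing; auto. intros u v Hu Huv Hv.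
    apply rpow_abs_le, Hmax; [lra |]. pose proof (ER_real_f_le u v); lra.
Qed.

Lemma ex_RInt_loc_cost eta : ex_RInt_loc lo hi (cost eta).
Proof.
  intros c d Hc Hcd Hd.
  set (m := Rmin (Rmax c eta) d).
  assert (Hm : c <= m <= d) by (unfold m, Rmin, Rmax; repeat destruct Rle_dec; lra).
  assert (Hleft : forall x, c < x < m -> x < eta)
    by (unfold m, Rmin, Rmax; repeat destruct Rle_dec; intros; lra).
  assert (Hright : forall x, m < x < d -> eta <= x)
    by (unfold m, Rmin, Rmax; repeat destruct Rle_dec; intros; lra).
  apply (ex_RInt_Chasles _ _ m).
  - apply (ex_RInt_ext (fun x => rpow_abs (ER_real (f x) - a) r)); [| apply ex_RInt_loc_dev; lra].
    intros x Hx; rewrite Rmin_left, Rmax_right in Hx by lra.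
    unfold cost, step_fun; destruct (Rlt_dec x eta); [reflexivity |].
    specialize (Hleft x Hx); lra.
  - apply (ex_RInt_ext (fun x => rpow_abs (ER_real (f x) - b) r)); [| apply ex_RInt_loc_dev; lra].
    intros x Hx; rewrite Rmin_left, Rmax_right in Hx by lra.
    unfold cost, step_fun; destruct (Rlt_dec x eta); [| reflexivity].
    specialize (Hright x Hx); lra.
Qed.

Lemma cost_integral_exists eta : exists V, integral_nonneg lo hi (cost eta) V.
Proof.
  destruct f_Lr as [_ [V0 HV0]].
  set (M := Rabs a + Rabs b).
  apply (integral_nonneg_exists lo hi (cost eta) (fun x => rpow_abs (ER_real (f x)) r) V0
           (rpow_abs 2 r) (rpow_abs M r)); auto.
  - apply ex_RInt_loc_cost.
  - intros c d Hc Hcd Hd. apply (ex_RInt_ext (fun x => rpow_abs (ER_real (f x) - 0) r)).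
    { intros x _; now rewrite Rminus_0_r. }
    now apply ex_RInt_loc_dev.
  - apply rpow_abs_ge0.
  - apply rpow_abs_ge0.
  - intros x _. apply rpow_abs_sub_le; [lra |].
    pose proof (Rabs_pos a); pose proof (Rabs_pos b).
    unfold step_fun, M; destruct (Rlt_dec x eta); lra.
Qed.

Lemma dist_min_iff_cost_min xi :
  (forall eta, lo <= eta <= hi -> forall Nxi Neta,
     Lr_dist lo hi r f (step_fun a b xi) Nxi -> Lr_dist lo hi r f (step_fun a b eta) Neta ->
     Nxi <= Neta) <->
  (forall eta, lo <= eta <= hi -> forall Vxi Veta,
     integral_nonneg lo hi (cost xi) Vxi -> integral_nonneg lo hi (cost eta) Veta ->
     Vxi <= Veta).
Proof.
  assert (Hroot : 0 < / r) by (apply Rinv_0_lt_compat; lra).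
  assert (Hge0 : forall eta V, integral_nonneg lo hi (cost eta) V -> 0 <= V)
    by (intros eta V; apply integral_nonneg_ge0; intros; apply rpow_abs_ge0).
  split.
  - intros Hmin eta Heta Vxi Veta Hxi Heta'.
    apply Rnot_lt_le. intros Hlt.
    assert (rpow_abs Veta (/ r) < rpow_abs Vxi (/ r)).
    { apply rpow_abs_lt; auto. rewrite !Rabs_right; try apply Rle_ge; eauto. }
    enough (rpow_abs Vxi (/ r) <= rpow_abs Veta (/ r)) by lra.
    apply (Hmin eta Heta); [now exists Vxi | now exists Veta].
  - intros Hmin eta Heta Nxi Neta [Vxi [Hxi ->]] [Veta [Heta' ->]].
    apply rpow_abs_le; [lra |]. rewrite !Rabs_right; try apply Rle_ge; eauto.
Qed.

Lemma cost_eq_outside u v x : u <= v -> x <> u -> ~ (u < x < v) -> cost u x = cost v x.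
Proof. intros Huv Hxu Hx. unfold cost, step_fun. now do 2 destruct Rlt_dec; try lra. Qed.

Lemma cost_between u v x : u < x < v ->
  cost u x = rpow_abs (ER_real (f x) - b) r /\ cost v x = rpow_abs (ER_real (f x) - a) r.
Proof. intros Hx. unfold cost, step_fun. now do 2 destruct Rlt_dec; try lra. Qed.

Lemma cost_le_of_ge_between u v Vu Vv : u <= v ->
  (forall x, lo < x < hi -> u < x < v -> (a + b) / 2 <= ER_real (f x)) ->
  integral_nonneg lo hi (cost u) Vu -> integral_nonneg lo hi (cost v) Vv -> Vu <= Vv.
Proof.
  intros Huv Hmid. apply (integral_nonneg_le _ _ _ _ u); try apply ex_RInt_loc_cost.
  intros x Hx Hxu. destruct (classic (u < x < v)) as [Hin | Hout].
  - destruct (cost_between u v x Hin) as [-> ->].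
    apply rpow_abs_le; [lra |]. now apply Rabs_sub_le_of_ge_mid, Hmid.
  - rewrite (cost_eq_outside u v x) by auto. apply Rle_refl.
Qed.

Lemma cost_le_of_le_between u v Vu Vv : u <= v ->
  (forall x, lo < x < hi -> u < x < v -> ER_real (f x) <= (a + b) / 2) ->
  integral_nonneg lo hi (cost u) Vu -> integral_nonneg lo hi (cost v) Vv -> Vv <= Vu.
Proof.
  intros Huv Hmid Hu Hv.
  apply (integral_nonneg_le _ _ _ _ u _ _ (ex_RInt_loc_cost v) (ex_RInt_loc_cost u)); auto.
  intros x Hx Hxu. destruct (classic (u < x < v)) as [Hin | Hout].
  - destruct (cost_between u v x Hin) as [-> ->].
    apply rpow_abs_le; [lra |]. now apply Rabs_sub_le_of_le_mid, Hmid.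
  - rewrite (cost_eq_outside u v x) by auto. apply Rle_refl.
Qed.

(* The gap is realised on the middle third [[P, Q]] of [[u, v]], where [f]
   stays below [f Q < (a + b) / 2]. *)
Lemma cost_lt_of_lt_between u v Vu Vv : lo <= u -> u < v -> v <= hi ->
  (forall x, lo < x < hi -> u < x < v -> ER_real (f x) < (a + b) / 2) ->
  integral_nonneg lo hi (cost u) Vu -> integral_nonneg lo hi (cost v) Vv -> Vv < Vu.
Proof.
  intros Hu Huv Hv Hmid HVu HVv.
  set (P := u + (v - u) / 3). set (Q := u + 2 * (v - u) / 3).
  set (m := ER_real (f Q)).
  assert (Hm : m < (a + b) / 2) by (apply Hmid; unfold Q; lra).
  set (gap := Rmin (b - a) (2 * ((a + b) / 2 - m))).
  assert (Hgap : 0 < gap) by (apply Rmin_glb_lt; lra).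
  apply (integral_nonneg_lt _ _ _ _ u P Q (rpow_abs gap r) _ _
           (ex_RInt_loc_cost v) (ex_RInt_loc_cost u)); auto; try (unfold P, Q; lra).
  - intros x; apply rpow_abs_ge0.
  - intros x Hx Hxu. destruct (classic (u < x < v)) as [Hin | Hout].
    + destruct (cost_between u v x Hin) as [-> ->].
      apply rpow_abs_le; [lra |]. apply Rabs_sub_le_of_le_mid; auto.
      apply Rlt_le, Hmid; lra.
    + rewrite (cost_eq_outside u v x) by (auto; lra). apply Rle_refl.
  - intros x Hx. destruct (cost_between u v x) as [-> ->]; [unfold P, Q in Hx; lra |].
    apply rpow_abs_add_le; [lra | lra |].
    apply (Rabs_sub_gap_of_lt_mid a b); auto. apply ER_real_f_le; unfold P, Q in *; lra.
  - now apply rpow_abs_gt0, Rgt_not_eq.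
Qed.

Lemma cost_lt_of_gt_between u v Vu Vv : lo <= u -> u < v -> v <= hi ->
  (forall x, lo < x < hi -> u < x < v -> (a + b) / 2 < ER_real (f x)) ->
  integral_nonneg lo hi (cost u) Vu -> integral_nonneg lo hi (cost v) Vv -> Vu < Vv.
Proof.
  intros Hu Huv Hv Hmid HVu HVv.
  set (P := u + (v - u) / 3). set (Q := u + 2 * (v - u) / 3).
  set (m := ER_real (f P)).
  assert (Hm : (a + b) / 2 < m) by (apply Hmid; unfold P; lra).
  set (gap := Rmin (b - a) (2 * (m - (a + b) / 2))).
  assert (Hgap : 0 < gap) by (apply Rmin_glb_lt; lra).
  apply (integral_nonneg_lt _ _ _ _ u P Q (rpow_abs gap r) _ _
           (ex_RInt_loc_cost u) (ex_RInt_loc_cost v)); auto; try (unfold P, Q; lra).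
  - intros x; apply rpow_abs_ge0.
  - intros x Hx Hxu. destruct (classic (u < x < v)) as [Hin | Hout].
    + destruct (cost_between u v x Hin) as [-> ->].
      apply rpow_abs_le; [lra |]. apply Rabs_sub_le_of_ge_mid; auto.
      apply Rlt_le, Hmid; lra.
    + rewrite (cost_eq_outside u v x) by (auto; lra). apply Rle_refl.
  - intros x Hx. destruct (cost_between u v x) as [-> ->]; [unfold P, Q in Hx; lra |].
    apply rpow_abs_add_le; [lra | lra |].
    apply (Rabs_sub_gap_of_gt_mid a b); auto. apply ER_real_f_le; unfold P, Q in *; lra.
  - now apply rpow_abs_gt0, Rgt_not_eq.
Qed.

Lemma quantile_of_cost_min xi : lo <= xi <= hi ->
  (forall eta, lo <= eta <= hi -> forall Vxi Veta,
     integral_nonneg lo hi (cost xi) Vxi -> integral_nonneg lo hi (cost eta) Veta ->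
     Vxi <= Veta) ->
  in_quantile lo hi f (Fin ((a + b) / 2)) xi.
Proof.
  intros Hxi Hmin.
  destruct (quantile_lo_exists lo hi f (Fin ((a + b) / 2))) as [L [HL HLI]]; [lra |].
  destruct (quantile_hi_exists lo hi f (Fin ((a + b) / 2))) as [U [HU HUI]]; [lra |].
  destruct (cost_integral_exists xi) as [Vxi HVxi].
  exists L, U. repeat split; auto.
  - apply Rnot_lt_le. intros HxiL.
    destruct (cost_integral_exists L) as [VL HVL].
    enough (VL < Vxi) by (pose proof (Hmin L HLI _ _ HVxi HVL); lra).
    apply (cost_lt_of_lt_between xi L); auto; try lra.
    intros x Hx Hbetween. apply Rnot_le_lt. rewrite <- Fin_le_f_iff by auto.
    apply (not_ge_below_quantile_lo lo hi f _ L); auto; lra.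
  - apply Rnot_lt_le. intros HUxi.
    destruct (cost_integral_exists U) as [VU HVU].
    enough (VU < Vxi) by (pose proof (Hmin U HUI _ _ HVxi HVU); lra).
    apply (cost_lt_of_gt_between U xi); auto; try lra.
    intros x Hx Hbetween. apply Rnot_le_lt. rewrite <- f_le_Fin_iff by auto.
    apply (not_le_above_quantile_hi lo hi f _ U); auto; lra.
Qed.

Lemma cost_min_of_quantile xi : in_quantile lo hi f (Fin ((a + b) / 2)) xi ->
  forall eta, lo <= eta <= hi -> forall Vxi Veta,
    integral_nonneg lo hi (cost xi) Vxi -> integral_nonneg lo hi (cost eta) Veta ->
    Vxi <= Veta.
Proof.
  intros [L [U [HL [HU [HLxi HxiU]]]]] eta Heta Vxi Veta HVxi HVeta.
  destruct (Rle_or_lt xi eta) as [Hxe | Hex].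
  - apply (cost_le_of_ge_between xi eta); auto.
    intros x Hx Hbetween. apply Fin_le_f_iff; auto.
    apply (ge_above_quantile_lo lo hi f _ f_nondecreasing L); auto; lra.
  - apply (cost_le_of_le_between eta xi); auto; [lra |].
    intros x Hx Hbetween. apply f_le_Fin_iff; auto.
    apply (le_below_quantile_hi lo hi f _ f_nondecreasing U); auto; lra.
Qed.

End StepFit.

Theorem lemma4p1 (lo hi r : R) (f : R -> ERbar) (a b : R)
  (Hlohi : lo < hi) (Hr : 1 <= r)
  (Hmono : nondecreasing_on lo hi f) (HLr : in_Lr lo hi r f)
  (Hab : a < b) (xi : R) (Hxi : lo <= xi <= hi) :
  (forall eta, lo <= eta <= hi ->
     forall Nxi Neta,
       Lr_dist lo hi r f (step_fun a b xi) Nxi ->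
       Lr_dist lo hi r f (step_fun a b eta) Neta ->
       Nxi <= Neta)
  <-> in_quantile lo hi f (Fin ((a + b) / 2)) xi.
Proof.
  rewrite (dist_min_iff_cost_min lo hi r f a b Hr).
  split.
  - now apply quantile_of_cost_min.
  - now apply cost_min_of_quantile.
Qed.
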